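(* Let $q\ge1$ and $k\ge2$ be integers, and for $1\le t\le q$ let $\boldsymbol{\alpha}_t=(\alpha_{t,1},\dots,\alpha_{t,k})$ with $0<\alpha_{t,1},\dots,\alpha_{t,k}<1$ and $\alpha_{t,1}+\cdots+\alpha_{t,k}=1$. There exist constants $C,N$ depending only on $k$, $q$ and $(\boldsymbol\alpha_t)_{1\le t\le q}$ such that the following holds. For all integers $n\ge N$, $d\ge1$, all $g_1,\dots,g_{k-1}\in\mathbb{Z}$ and all integers $0\le i_1,\dots,i_q\le n$ with $i_1+\cdots+i_q=n$, $$\Bigg|\sum\prod_{t=1}^q P_{i_t,\mathbf{s}_t,\boldsymbol{\alpha}_t}-\frac{1}{d^{k-1}}\Bigg|\le C\,\frac{\log n}{\sqrt n},$$ where the sum is over all integer vectors $\mathbf{s}_t=(s_{t,1},\dots,s_{t,k})$, $1\le t\le q$, with $0\le s_{t,1},\dots,s_{t,k}\le i_t$, $s_{t,1}+\cdots+s_{t,k}=i_t$ for every $t$, and $s^{(a)}\equiv g_a\pmod d$ for $a=1,\dots,k-1$, with $s^{(a)}:=s_{1,a}+\cdots+s_{q,a}$.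
   Context: For nonnegative integers $n,u_1,\dots,u_k$ with $u_1+\cdots+u_k=n$, $\mathbf{u}=(u_1,\dots,u_k)$ and $\boldsymbol\alpha=(\alpha_1,\dots,\alpha_k)$, $P_{n,\mathbf{u},\boldsymbol\alpha}:=\frac{n!}{u_1!\cdots u_k!}\alpha_1^{u_1}\cdots\alpha_k^{u_k}$ (the multinomial coefficient being $1$ when $n=0$). *)

From HB Require Import structures.
From mathcomp Require Import all_boot all_order all_algebra.
From mathcomp Require Import all_classical all_reals all_analysis.
Set Implicit Arguments. Unset Strict Implicit. Unset Printing Implicit Defensive.
Import Order.TTheory GRing.Theory Num.Theory.
Local Open Scope ring_scope.

Definition Pmult (R : realType) (k n : nat) (u : 'I_k -> nat) (alpha : 'I_k -> R) : R :=
  (n`!)%:R / (\prod_(j < k) (u j)`!)%:R * \prod_(j < k) alpha j ^+ u j.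

From mathcomp Require Import all_boot all_order all_algebra.
From mathcomp Require Import all_classical all_reals all_analysis.
From mathcomp Require Import ring lra.

(* Conditioning on every row but one row t0 with i_t0 >= n/q turns the congruence
   constraint into a constraint on a single multinomial vector, so the error is a
   convex combination of single-row errors.  For one row, peel off the first
   coordinate X ~ Bin(m, p): given X = x, the remaining coordinates form a multinomial
   vector of size m - x, so by induction the error is at most
   E[C' / sqrt (m - X + 1)] + |P(X = r mod d) - 1/d|.  The first term is O(1/sqrt m) by
   AM-GM and E[1/(m - X + 1)] <= 1/((m + 1)(1 - p)); the second is O(1/sqrt m) by Abel
   summation, the partial sums of [l = r mod d] - 1/d being bounded by 1 and the total
   variation of the binomial law being E|X - mp| / (m p (1 - p)).  This gives
   O(1/sqrt n), better than the claimed (log n)/sqrt n. *)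

Set Implicit Arguments.
Unset Strict Implicit.
Unset Printing Implicit Defensive.

Import Order.TTheory GRing.Theory Num.Theory.
Local Open Scope ring_scope.

Lemma ler_norm_amgm (R : realFieldType) (y c : R) : 0 < c -> `|y| <= (y ^+ 2 / c + c) / 2.
Proof.
move=> c_gt0; rewrite -(real_normK (num_real y)).
have : 0 <= c^-1 * (`|y| - c) ^+ 2 / 2.
  by rewrite mulr_ge0 // mulr_ge0 ?sqr_ge0 // invr_ge0 ltW.
have -> : c^-1 * (`|y| - c) ^+ 2 / 2 = (`|y| ^+ 2 / c + c) / 2 - `|y|.
  by field; rewrite gt_eqF.
lra.
Qed.

Lemma inv_sqrt_le (R : rcfType) (y c : R) : 0 < y -> 0 < c ->
  1 / Num.sqrt y <= 1 / (2 * c) + c / (2 * y).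
Proof.
move=> y_gt0 c_gt0; have sy_gt0 : 0 < Num.sqrt y by rewrite sqrtr_gt0.
have := ler_norm_amgm (1 / Num.sqrt y) (divr_gt0 ltr01 c_gt0).
rewrite ger0_norm ?divr_ge0 ?sqrtr_ge0 // expr_div_n sqr_sqrtr ?(ltW y_gt0) // ?expr1n => h.
apply: le_trans h _; rewrite le_eqVlt; apply/predU1P; left.
by field; rewrite !gt_eqF.
Qed.

Section AbelSummation.
Variables (R : numDomainType) (b D S : nat -> R).
Hypotheses (S0 : S 0%N = 0) (SS : forall j, S j.+1 = S j + D j).

Lemma abel_summation N :
  \sum_(j < N) b j * D j = \sum_(j < N) (b j - b j.+1) * S j.+1 + b N * S N.
Proof.
elim: N => [|N IH]; first by rewrite !big_ord0 S0 mulr0 addr0.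
by rewrite !big_ord_recr /= IH (SS N); ring.
Qed.

Lemma abel_summation_bound N : (forall j, `|S j| <= 1) ->
  `|\sum_(j < N) b j * D j| <= \sum_(j < N) `|b j - b j.+1| + `|b N|.
Proof.
move=> S_le1; rewrite abel_summation.
apply: le_trans (ler_normD _ _) _; apply: lerD; last by rewrite normrM ler_piMr.
apply: le_trans (ler_norm_sum _ _ _) _; apply: ler_sum => j _.
by rewrite normrM ler_piMr.
Qed.

End AbelSummation.

Section ResidueIndicator.
Variables (R : realFieldType) (d r : nat).
Hypotheses (d_gt0 : (0 < d)%N) (r_lt_d : (r < d)%N).

Definition mod_dev (l : nat) : R := (l %% d == r)%N%:R - 1 / d%:R.

Definition mod_dev_psum (J : nat) : R := (r < J %% d)%N%:R - (J %% d)%N%:R / d%:R.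

Lemma mod_dev_psum0 : mod_dev_psum 0 = 0.
Proof. by rewrite /mod_dev_psum mod0n ltn0 mul0r subr0. Qed.

Lemma mod_dev_psumS J : mod_dev_psum J.+1 = mod_dev_psum J + mod_dev J.
Proof.
have d_neq0 : d%:R != 0 :> R by rewrite pnatr_eq0 -lt0n.
have : (J.+1 %% d = (J %% d).+1 %% d)%N by rewrite -addn1 -modnDml addn1.
rewrite /mod_dev_psum /mod_dev => ->; have := ltn_pmod J d_gt0.
set j := (J %% d)%N => j_lt_d.
case: (ltnP j.+1 d) => [j1_lt_d | d_le_j1].
  rewrite modn_small // -natr1.
  case: (ltngtP r j) => h.
  - by rewrite ltnS (ltnW h) /=; field.
  - by rewrite ltnS leqNgt h /=; field.
  - by rewrite h ltnS leqnn /=; field.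
have j1_eq_d : j.+1 = d by apply/eqP; rewrite eqn_leq j_lt_d d_le_j1.
have -> : j%:R = d%:R - 1 :> R by rewrite -j1_eq_d -natr1 addrK.
rewrite j1_eq_d modnn ltn0 /=.
case: (ltngtP r j) => h.
- by rewrite /=; field.
- by move: r_lt_d; rewrite -j1_eq_d ltnS leqNgt h.
- by rewrite /=; field.
Qed.

Lemma mod_dev_psum_le1 J : `|mod_dev_psum J| <= 1.
Proof.
have d_gt0R : 0 < d%:R :> R by rewrite ltr0n.
have frac_ge0 : 0 <= (J %% d)%N%:R / d%:R :> R by rewrite divr_ge0.
have frac_le1 : (J %% d)%N%:R / d%:R <= 1 :> R.
  by rewrite ler_pdivrMr // mul1r ler_nat ltnW // ltn_pmod.
rewrite /mod_dev_psum; case: (r < J %% d)%N => /=; rewrite ler_norml; apply/andP; split; lra.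
Qed.

End ResidueIndicator.

Section Binomial.
Variables (R : rcfType) (p : R).
Hypothesis p01 : 0 < p < 1.

Let p_gt0 : 0 < p. Proof. by case/andP: p01. Qed.
Let q_gt0 : 0 < 1 - p. Proof. by case/andP: p01 => _; rewrite subr_gt0. Qed.

Definition binom (m x : nat) : R := 'C(m, x)%:R * p ^+ x * (1 - p) ^+ (m - x).

Definition binom_mean (m : nat) (f : nat -> R) : R := \sum_(x < m.+1) binom m x * f x.

Lemma binom_ge0 m x : 0 <= binom m x.
Proof. by rewrite !mulr_ge0 ?exprn_ge0 ?ler0n ?(ltW p_gt0) ?(ltW q_gt0). Qed.

Lemma binom_small m x : (m < x)%N -> binom m x = 0.
Proof. by move=> m_lt_x; rewrite /binom bin_small // !mul0r. Qed.

Lemma eq_binom_mean m f g : f =1 g -> binom_mean m f = binom_mean m g.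
Proof. by move=> fg; apply: eq_bigr => x _; rewrite fg. Qed.

Lemma ler_binom_mean m f g : (forall i, f i <= g i) -> binom_mean m f <= binom_mean m g.
Proof. by move=> fg; apply: ler_sum => x _; rewrite ler_wpM2l ?binom_ge0. Qed.

Lemma binom_meanD m a b f g :
  binom_mean m (fun i => a * f i + b * g i) = a * binom_mean m f + b * binom_mean m g.
Proof. by rewrite /binom_mean !mulr_sumr -big_split; apply: eq_bigr => x _ /=; ring. Qed.

Lemma binom_meanS m f :
  binom_mean m.+1 f = p * binom_mean m (fun i => f i.+1) + (1 - p) * binom_mean m f.
Proof.
rewrite /binom_mean big_ord_recl.
under eq_bigr => i _ do rewrite lift0.
rewrite [X in _ = _ + (1 - p) * X]big_ord_recl.
under [X in _ = _ + (1 - p) * (_ + X)]eq_bigr => i _ do rewrite lift0.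
rewrite !mulr_sumr.
have -> : \sum_(i < m.+1) binom m.+1 i.+1 * f i.+1 =
   \sum_(i < m.+1) p * (binom m i * f i.+1) +
   \sum_(i < m.+1) 'C(m, i.+1)%:R * p ^+ i.+1 * (1 - p) ^+ (m - i) * f i.+1.
  rewrite -big_split; apply: eq_bigr => i _ /=.
  by rewrite /binom binS natrD subSS !exprS; ring.
rewrite [\sum_(i < m.+1) 'C(m, i.+1)%:R * _ * _ * _]big_ord_recr /=.
rewrite bin_small // !mul0r addr0.
have -> : \sum_(i < m) 'C(m, i.+1)%:R * p ^+ i.+1 * (1 - p) ^+ (m - i) * f i.+1 =
   \sum_(i < m) (1 - p) * (binom m i.+1 * f i.+1).
  apply: eq_bigr => i _; rewrite /binom -subnSK // [(1 - p) ^+ (_.+1)]exprS; ring.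
rewrite /binom !bin0 !subn0 !expr0 exprS mulrDr mulr_sumr.
set S1 := \sum_(i < m.+1) _; set S2 := \sum_(i < m) _; ring.
Qed.

Lemma binom_mean_quadratic m a b c :
  binom_mean m (fun i => a + b * i%:R + c * i%:R ^+ 2) =
  a + b * (m%:R * p) + c * (m%:R * p * (1 - p) + (m%:R * p) ^+ 2).
Proof.
elim: m a b c => [|m IH] a b c.
  by rewrite /binom_mean big_ord1 /binom bin0 !expr0 /=; ring.
rewrite binom_meanS
  (@eq_binom_mean _ _ (fun i => (a + b + c) + (b + 2 * c) * i%:R + c * i%:R ^+ 2)).
  by rewrite !IH -natr1; ring.
by move=> i; rewrite -natr1; ring.
Qed.

Lemma binom_sum1 m : \sum_(x < m.+1) binom m x = 1.
Proof.
transitivity (binom_mean m (fun i => 1 + 0 * i%:R + 0 * i%:R ^+ 2)).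
  by apply: eq_bigr => x _; ring.
by rewrite binom_mean_quadratic; ring.
Qed.

Lemma binom_mean_var m : binom_mean m (fun i => (m%:R * p - i%:R) ^+ 2) = m%:R * p * (1 - p).
Proof.
rewrite (@eq_binom_mean _ _ (fun i => (m%:R * p) ^+ 2 + (- 2 * m%:R * p) * i%:R + 1 * i%:R ^+ 2)).
  by rewrite binom_mean_quadratic; ring.
by move=> i; ring.
Qed.

(* Average [|y| <= (y ^ 2 / c + c) / 2] with [c = sqrt m] against the variance. *)
Lemma binom_mean_abs_dev m : (0 < m)%N ->
  binom_mean m (fun i => `|m%:R * p - i%:R|) <= Num.sqrt m%:R.
Proof.
move=> m_gt0; set c := Num.sqrt m%:R.
have c_gt0 : 0 < c by rewrite sqrtr_gt0 ltr0n.
have c2 : c ^+ 2 = m%:R by rewrite sqr_sqrtr ?ler0n.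
have amgm i : `|m%:R * p - i%:R| <= 1 / (2 * c) * (m%:R * p - i%:R) ^+ 2 + c / 2 * 1.
  apply: le_trans (ler_norm_amgm _ c_gt0) _.
  by rewrite le_eqVlt; apply/predU1P; left; field; rewrite gt_eqF.
apply: le_trans (ler_binom_mean m amgm) _.
rewrite binom_meanD binom_mean_var.
have -> : binom_mean m (fun=> 1) = 1.
  by rewrite /binom_mean -[RHS](binom_sum1 m); apply: eq_bigr => x _; rewrite mulr1.
have var_le : m%:R * p * (1 - p) <= c ^+ 2.
  by rewrite c2 -[leRHS]mulr1 -mulrA ler_wpM2l ?ler0n //; nra.
have : 1 / (2 * c) * (m%:R * p * (1 - p)) <= 1 / (2 * c) * c ^+ 2.
  by rewrite ler_wpM2l // divr_ge0 // mulr_ge0 // ltW.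
have -> : 1 / (2 * c) * c ^+ 2 = c / 2 by field; rewrite gt_eqF.
lra.
Qed.

Lemma binom_diffS m i : m.+1%:R * p * (1 - p) * (binom m i.+1 - binom m i) =
  binom m.+1 i.+1 * (m.+1%:R * p - i.+1%:R).
Proof.
case: (ltngtP i m) => [i_lt_m | m_lt_i | ->].
- have bin_id := congr1 (fun n => n%:R : R) (mul_bin_diag m.+1 i).
  rewrite /= !natrM binS natrD in bin_id.
  rewrite /binom subSS -(subnSK i_lt_m) binS natrD !exprS.
  apply: subr0_eq; transitivity (p * p ^+ i * (1 - p) * (1 - p) ^+ (m - i.+1) *
     (i.+1%:R * ('C(m, i.+1)%:R + 'C(m, i)%:R) - m.+1%:R * 'C(m, i)%:R)); first by ring.
  by rewrite bin_id subrr mulr0.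
- by rewrite !binom_small ?subrr ?mulr0 ?mul0r // ltnW.
- by rewrite binom_small // /binom !binn !subnn !expr0 exprS; ring.
Qed.

Lemma binomS_down m x : (x <= m)%N ->
  m.+1%:R * (1 - p) * binom m x = (m.+1 - x)%:R * binom m.+1 x.
Proof.
move=> x_le_m.
have bin_id := congr1 (fun n => n%:R : R) (mul_bin_down m.+1 x).
rewrite /= !natrM in bin_id.
rewrite /binom [in (1 - p) ^+ (m.+1 - x)](subSn x_le_m) exprS.
transitivity (m.+1%:R * 'C(m, x)%:R * (p ^+ x * (1 - p) * (1 - p) ^+ (m - x))); first by ring.
by rewrite bin_id; ring.
Qed.

(* Abel summation against the partial sums of [mod_dev], which stay bounded by 1;
   the total variation of [binom m] is then a first absolute moment. *)
Lemma binom_mod_bound m d r : (0 < d)%N -> (r < d)%N ->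
  `|\sum_(x < m.+1) binom m x * (x %% d == r)%N%:R - 1 / d%:R| <=
  1 / (p * (1 - p) * Num.sqrt m.+1%:R).
Proof.
move=> d_gt0 r_lt_d.
set c := Num.sqrt m.+1%:R; set K := m.+1%:R * p * (1 - p).
have c_gt0 : 0 < c by rewrite sqrtr_gt0 ltr0n.
have K_gt0 : 0 < K by rewrite !mulr_gt0 ?ltr0n.
have -> : \sum_(x < m.+1) binom m x * (x %% d == r)%N%:R - 1 / d%:R =
          \sum_(x < m.+1) binom m x * mod_dev R d r x.
  under [RHS]eq_bigr => x _ do rewrite /mod_dev mulrBr.
  by rewrite sumrB -mulr_suml binom_sum1 (mul1r (1 / _)).
apply: le_trans (abel_summation_bound (binom m) (mod_dev_psum0 R d r)
  (mod_dev_psumS R d_gt0 r_lt_d) m.+1 (mod_dev_psum_le1 R r d_gt0)) _.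
rewrite binom_small // normr0 addr0.
have diff j : `|binom m j - binom m j.+1| = binom m.+1 j.+1 * `|m.+1%:R * p - j.+1%:R| / K.
  have := binom_diffS m j; rewrite -/K distrC => diffS.
  have -> : binom m j.+1 - binom m j = binom m.+1 j.+1 * (m.+1%:R * p - j.+1%:R) / K.
    by rewrite -diffS mulrAC divff ?gt_eqF ?mul1r.
  by rewrite normrM normrM (ger0_norm (binom_ge0 _ _)) (gtr0_norm (x := K^-1)) ?invr_gt0.
under eq_bigr do rewrite diff.
rewrite -mulr_suml.
have abs_dev : \sum_(j < m.+1) binom m.+1 j.+1 * `|m.+1%:R * p - j.+1%:R| <= c.
  apply: le_trans (binom_mean_abs_dev (ltn0Sn m)).
  rewrite /binom_mean [leRHS]big_ord_recl.
  under [X in _ <= _ + X]eq_bigr => j _ do rewrite lift0.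
  exact: ler_wpDl (mulr_ge0 (binom_ge0 _ _) (normr_ge0 _)) (lexx _).
apply: le_trans (ler_wpM2r _ abs_dev) _; first by rewrite invr_ge0 ltW.
rewrite le_eqVlt; apply/predU1P; left.
rewrite /K -(sqr_sqrtr (ler0n R m.+1)) -/c; field.
by rewrite !gt_eqF.
Qed.

Lemma binom_mean_inv m :
  \sum_(x < m.+1) binom m x / (m - x).+1%:R <= 1 / (m.+1%:R * (1 - p)).
Proof.
have -> : \sum_(x < m.+1) binom m x / (m - x).+1%:R =
          \sum_(x < m.+1) binom m.+1 x / (m.+1%:R * (1 - p)).
  apply: eq_bigr => x _; have x_le_m : (x <= m)%N by rewrite -ltnS.
  have := binomS_down x_le_m; rewrite (subSn x_le_m) => down.
  apply: (@mulIf _ (m.+1%:R * (1 - p) * (m - x).+1%:R)).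
    by rewrite !mulf_neq0 ?gt_eqF ?ltr0n.
  transitivity (m.+1%:R * (1 - p) * binom m x); first by field; rewrite gt_eqF ?ltr0n.
  by rewrite down; field; rewrite !gt_eqF ?ltr0n.
rewrite -mulr_suml ler_wpM2r ?invr_ge0 ?mulr_ge0 ?ler0n ?(ltW q_gt0) //.
rewrite -(binom_sum1 m.+1) [leRHS]big_ord_recr /=.
by rewrite ler_wpDr ?binom_ge0.
Qed.

Lemma binom_mean_inv_sqrt m :
  \sum_(x < m.+1) binom m x / Num.sqrt (m - x).+1%:R <= 1 / ((1 - p) * Num.sqrt m.+1%:R).
Proof.
set c := Num.sqrt m.+1%:R.
have c_gt0 : 0 < c by rewrite sqrtr_gt0 ltr0n.
have c2 : c ^+ 2 = m.+1%:R by rewrite sqr_sqrtr ?ler0n.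
have pointwise (b y : R) : 0 <= b -> 0 < y ->
    b / Num.sqrt y <= 1 / (2 * c) * b + c / 2 * (b / y).
  move=> b_ge0 y_gt0; have := ler_wpM2l b_ge0 (inv_sqrt_le y_gt0 c_gt0).
  rewrite mul1r => h; apply: le_trans h _.
  by rewrite le_eqVlt; apply/predU1P; left; field; rewrite !gt_eqF.
apply: le_trans (_ : _ <= \sum_(x < m.+1)
    (1 / (2 * c) * binom m x + c / 2 * (binom m x / (m - x).+1%:R))) _.
  by apply: ler_sum => x _; rewrite pointwise ?binom_ge0 ?ltr0Sn.
rewrite big_split /= -!mulr_sumr binom_sum1 mulr1.
apply: le_trans (lerD (lexx _) (ler_wpM2l _ (binom_mean_inv m))) _.
  by rewrite divr_ge0 ?ltW.
have inv_q_ge1 : 1 <= 1 / (1 - p) by rewrite ler_pdivlMr // mul1r gerBl ltW.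
have -> : 1 / (2 * c) + c / 2 * (1 / (m.+1%:R * (1 - p))) = (1 + 1 / (1 - p)) / (2 * c).
  by rewrite -c2; field; rewrite !gt_eqF.
have -> : 1 / ((1 - p) * c) = (1 / (1 - p) + 1 / (1 - p)) / (2 * c).
  by field; rewrite !gt_eqF.
by rewrite ler_wpM2r ?invr_ge0 ?mulr_ge0 ?(ltW c_gt0) //; lra.
Qed.

(* Split the error as E[1_(X = r mod d) (G X - c)] + c (P(X = r mod d) - 1/d). *)
Lemma binom_congr_mixture m d r (G : nat -> R) (c C : R) :
  (0 < d)%N -> (r < d)%N -> 0 <= c <= 1 -> 0 <= C ->
  (forall x, (x <= m)%N -> `|G x - c| <= C / Num.sqrt (m - x).+1%:R) ->
  `|\sum_(x < m.+1) (x %% d == r)%N%:R * binom m x * G x - c / d%:R| <=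
  (C / (1 - p) + 1 / (p * (1 - p))) / Num.sqrt m.+1%:R.
Proof.
move=> d_gt0 r_lt_d /andP[c_ge0 c_le1] C_ge0 G_approx.
set ind := fun x : nat => (x %% d == r)%N%:R : R.
have ind_ge0 x : 0 <= ind x by rewrite ler0n.
have ind_le1 x : ind x <= 1 by rewrite /ind; case: (_ == _).
have -> : \sum_(x < m.+1) ind x * binom m x * G x - c / d%:R =
    \sum_(x < m.+1) ind x * binom m x * (G x - c) +
    c * (\sum_(x < m.+1) binom m x * ind x - 1 / d%:R).
  have -> : \sum_(x < m.+1) ind x * binom m x * (G x - c) =
      \sum_(x < m.+1) ind x * binom m x * G x - c * \sum_(x < m.+1) binom m x * ind x.
    by rewrite mulr_sumr -sumrB; apply: eq_bigr => x _; ring.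
  ring.
apply: le_trans (ler_normD _ _) _.
have cond_err : `|\sum_(x < m.+1) ind x * binom m x * (G x - c)| <=
    C / ((1 - p) * Num.sqrt m.+1%:R).
  apply: le_trans (ler_norm_sum _ _ _) _.
  apply: le_trans (_ : _ <= C * \sum_(x < m.+1) binom m x / Num.sqrt (m - x).+1%:R) _.
    rewrite mulr_sumr; apply: ler_sum => x _.
    rewrite normrM normrM (ger0_norm (ind_ge0 x)) (ger0_norm (binom_ge0 m x)).
    apply: le_trans (_ : _ <= 1 * binom m x * (C / Num.sqrt (m - x).+1%:R)) _.
      apply: ler_pM.
      - exact: mulr_ge0 (ind_ge0 x) (binom_ge0 m x).
      - exact: normr_ge0.
      - by apply: ler_wpM2r; [apply: binom_ge0 | apply: ind_le1].
      - by apply: G_approx; rewrite -ltnS.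
    by rewrite le_eqVlt; apply/predU1P; left; ring.
  apply: le_trans (ler_wpM2l C_ge0 (binom_mean_inv_sqrt m)) _.
  rewrite le_eqVlt; apply/predU1P; left.
  by field; rewrite !gt_eqF ?sqrtr_gt0 ?ltr0n ?p_gt0 ?q_gt0.
have congr_err : `|c * (\sum_(x < m.+1) binom m x * ind x - 1 / d%:R)| <=
    1 / (p * (1 - p) * Num.sqrt m.+1%:R).
  rewrite normrM ger0_norm //; apply: le_trans (ler_piMl (normr_ge0 _) c_le1) _.
  exact: binom_mod_bound.
apply: le_trans (lerD cond_err congr_err) _.
rewrite le_eqVlt; apply/predU1P; left.
by field; rewrite !gt_eqF ?sqrtr_gt0 ?ltr0n ?p_gt0 ?q_gt0.
Qed.

End Binomial.

Definition ffun_cons (T : finType) n (x : T) (f : {ffun 'I_n -> T}) : {ffun 'I_n.+1 -> T} :=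
  [ffun j => if unlift ord0 j is Some j' then f j' else x].

Lemma ffun_cons0 (T : finType) n (x : T) (f : {ffun 'I_n -> T}) : ffun_cons x f ord0 = x.
Proof. by rewrite ffunE unlift_none. Qed.

Lemma ffun_consS (T : finType) n (x : T) (f : {ffun 'I_n -> T}) j :
  ffun_cons x f (lift ord0 j) = f j.
Proof. by rewrite ffunE liftK. Qed.

Lemma big_ffun_ordS (R : nmodType) (T : finType) n (F : {ffun 'I_n.+1 -> T} -> R) :
  \sum_(f : {ffun 'I_n.+1 -> T}) F f =
  \sum_(x : T) \sum_(f : {ffun 'I_n -> T}) F (ffun_cons x f).
Proof.
rewrite pair_big /= (reindex (fun xf : T * {ffun 'I_n -> T} => ffun_cons xf.1 xf.2)) //.
exists (fun f : {ffun 'I_n.+1 -> T} => (f ord0, [ffun j => f (lift ord0 j)])).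
  move=> [x f] _ /=.
  by rewrite ffun_cons0; congr pair; apply/ffunP => j; rewrite ffunE ffun_consS.
move=> f _ /=; apply/ffunP => j; case: (unliftP ord0 j) => [j'|] ->.
  by rewrite ffun_consS ffunE.
by rewrite ffun_cons0.
Qed.

Lemma big_ffun_ord0 (R : nmodType) (T : finType) (x0 : T) (F : {ffun 'I_0 -> T} -> R) :
  \sum_(f : {ffun 'I_0 -> T}) F f = F [ffun=> x0].
Proof. by apply: big_pred1 => f /=; symmetry; apply/eqP/ffunP => -[]. Qed.

Lemma forall_ord0 (P : pred 'I_0) : [forall a, P a].
Proof. by apply/forallP => -[]. Qed.

Lemma forall_ordS k (P : pred 'I_k.+1) :
  [forall a, P a] = P ord0 && [forall a : 'I_k, P (lift ord0 a)].
Proof.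
apply/forallP/andP => [P_all | [P0 /forallP P_lift] a].
  by split; [|apply/forallP => a]; apply: P_all.
by case: (unliftP ord0 a) => [a'|] ->.
Qed.

Lemma eqz_mod1 (a b : int) : (a == b %[mod 1])%Z.
Proof. by rewrite !modz1. Qed.

Lemma eqz_mod_nat (x : nat) (h : int) d : (0 < d)%N ->
  (x%:Z == h %[mod d%:Z])%Z = (x %% d == `|(h %% d%:Z)%Z|)%N.
Proof.
move=> d_gt0; have h_mod_ge0 : (0 <= h %% d%:Z)%Z by rewrite modz_ge0 // eqz_nat -lt0n.
by rewrite modz_nat -{1}(gez0_abs h_mod_ge0) eqz_nat.
Qed.

Lemma absz_modz_lt (h : int) d : (0 < d)%N -> (`|(h %% d%:Z)%Z| < d)%N.
Proof.
move=> d_gt0; have h_mod_ge0 : (0 <= h %% d%:Z)%Z by rewrite modz_ge0 // eqz_nat -lt0n.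
by rewrite -ltz_nat gez0_abs // ltz_pmod.
Qed.

Lemma sum_ord_shrink (R : nmodType) B m (F : nat -> R) : (m <= B)%N ->
  (forall x, (m < x)%N -> F x = 0) -> \sum_(x < B.+1) F x = \sum_(x < m.+1) F x.
Proof.
move=> m_le_B F0; rewrite [RHS](big_ord_widen B.+1 F) // [RHS]big_mkcond.
by apply: eq_bigr => x _; case: ifP => // /negbT; rewrite -leqNgt => /F0.
Qed.

Lemma Pmult_ge0 (R : realType) k m (u : 'I_k -> nat) (alpha : 'I_k -> R) :
  (forall j, 0 <= alpha j) -> 0 <= Pmult m u alpha.
Proof. by move=> alpha_ge0; rewrite !mulr_ge0 ?prodr_ge0 // => j _; rewrite exprn_ge0. Qed.

Lemma eq_Pmult (R : realType) k m (u v : 'I_k -> nat) (alpha : 'I_k -> R) :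
  u =1 v -> Pmult m u alpha = Pmult m v alpha.
Proof.
move=> uv; rewrite /Pmult; congr (_ / _ * _).
  by congr (_%:R); apply: eq_bigr => j _; rewrite uv.
by apply: eq_bigr => j _; rewrite uv.
Qed.

Lemma Pmult_recl (R : realType) k m (v : 'I_k.+1 -> nat) (alpha : 'I_k.+1 -> R) :
  (\sum_j v j)%N = m -> alpha ord0 != 1 ->
  Pmult m v alpha = binom (alpha ord0) m (v ord0) *
    Pmult (m - v ord0) (fun j => v (lift ord0 j))
      (fun j => alpha (lift ord0 j) / (1 - alpha ord0)).
Proof.
rewrite big_ord_recl => <- alpha0_neq1.
set x := v ord0; set s := (\sum_(i < k) v (lift ord0 i))%N.
have q_neq0 : 1 - alpha ord0 != 0 by rewrite subr_eq0 eq_sym.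
rewrite addKn /Pmult /binom -(bin_fact (leq_addr s x)) addKn !big_ord_recl.
rewrite [in RHS](eq_bigr (fun j => alpha (lift ord0 j) ^+ v (lift ord0 j) *
  (1 - alpha ord0)^-1 ^+ v (lift ord0 j))) => [|j _]; last by rewrite exprMn.
rewrite big_split /= prodrXr -/s.
have fact_neq0 n : (n`!)%:R != 0 :> R by rewrite pnatr_eq0 -lt0n fact_gt0.
have prod_neq0 : (\prod_(i < k) (v (lift ord0 i))`!)%:R != 0 :> R.
  by rewrite pnatr_eq0 -lt0n prodn_gt0 // => i; rewrite fact_gt0.
rewrite !natrM exprVn.
set P := (\prod_(i < k) (v (lift ord0 i))`!)%:R.
set A := \prod_(i < k) alpha (lift ord0 i) ^+ v (lift ord0 i).
by field; rewrite expf_neq0 // prod_neq0 !fact_neq0.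
Qed.

(* Coordinates range over ['I_B.+1] as in the theorem; nothing is lost when [m <= B]. *)
Definition multinom_congr (R : realType) (k B m : nat) (alpha : 'I_k -> R) (d : nat)
    (h : 'I_k.-1 -> int) : R :=
  \sum_(u : {ffun 'I_k -> 'I_B.+1} | ((\sum_(j < k) (u j : nat))%N == m) &&
        [forall a : 'I_k.-1, ((u (widen_ord (leq_pred k) a) : nat)%:Z == h a %[mod d%:Z])%Z])
     Pmult m (fun j => (u j : nat)) alpha.

Lemma multinom_congr_mod1 (R : realType) k B m (alpha : 'I_k -> R) h :
  multinom_congr B m alpha 1 h =
  \sum_(u : {ffun 'I_k -> 'I_B.+1} | (\sum_(j < k) (u j : nat))%N == m)
    Pmult m (fun j => (u j : nat)) alpha.
Proof.
apply: eq_bigl => u; apply/andP/idP => [[] // | sum_u]; split => //.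
by apply/forallP => a; apply: eqz_mod1.
Qed.

Lemma widen_ord_pred0 k : widen_ord (leq_pred k.+2) (ord0 : 'I_k.+1) = ord0.
Proof. exact: val_inj. Qed.

Lemma widen_ord_pred_lift k (a : 'I_k) :
  widen_ord (leq_pred k.+2) (lift ord0 a) = lift ord0 (widen_ord (leq_pred k.+1) a).
Proof. exact: val_inj. Qed.

Lemma sum_ffun_cons n B (x : 'I_B.+1) (f : {ffun 'I_n -> 'I_B.+1}) :
  (\sum_(j < n.+1) ffun_cons x f j = x + \sum_(j < n) f j)%N.
Proof.
rewrite big_ord_recl ffun_cons0; congr (_ + _)%N.
by apply: eq_bigr => j _; rewrite ffun_consS.
Qed.

Lemma multinom_congr_recl (R : realType) k B m (alpha : 'I_k.+2 -> R) d
    (h : 'I_k.+1 -> int) :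
  (m <= B)%N -> alpha ord0 != 1 ->
  multinom_congr B m alpha d h = \sum_(x < m.+1)
     ((x : nat)%:Z == h ord0 %[mod d%:Z])%Z%:R * binom (alpha ord0) m x *
     multinom_congr B (m - x) (fun j => alpha (lift ord0 j) / (1 - alpha ord0)) d
       (fun a => h (lift ord0 a)).
Proof.
move=> m_le_B alpha0_neq1.
pose G x := ((x : nat)%:Z == h ord0 %[mod d%:Z])%Z%:R * binom (alpha ord0) m x *
  multinom_congr B (m - x) (fun j => alpha (lift ord0 j) / (1 - alpha ord0)) d
    (fun a => h (lift ord0 a)).
rewrite -(@sum_ord_shrink _ _ _ G m_le_B) => [|x m_lt_x]; last first.
  by rewrite /G binom_small // mulr0 mul0r.
rewrite /multinom_congr big_mkcond big_ffun_ordS.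
apply: eq_bigr => x _; rewrite /G mulr_sumr [RHS]big_mkcond; apply: eq_bigr => f _ /=.
rewrite sum_ffun_cons forall_ordS widen_ord_pred0 ffun_cons0.
under eq_forallb => a do rewrite widen_ord_pred_lift ffun_consS.
case: ((x : nat)%:Z == h ord0 %[mod d%:Z])%Z => /=; last by rewrite andbF !mul0r; case: ifP.
rewrite mul1r; case: (leqP x m) => [x_le_m | m_lt_x].
  rewrite -{1}(subnKC x_le_m) eqn_add2l; case: ifP => // /andP[/eqP sum_f _].
  rewrite (Pmult_recl (v := fun j => (ffun_cons x f j : nat))) ?ffun_cons0 //.
    by congr (_ * _); apply: eq_Pmult => j; rewrite ffun_consS.
  by rewrite sum_ffun_cons sum_f subnKC.
have -> : (x + \sum_(j < k.+1) f j == m)%N = false.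
  by apply/negbTE; rewrite neq_ltn (leq_trans m_lt_x (leq_addr _ _)) orbT.
by rewrite binom_small // mul0r; case: ifP.
Qed.

Lemma multinom_congr1 (R : realType) B m (alpha : 'I_1 -> R) d h : (m <= B)%N ->
  multinom_congr B m alpha d h = alpha ord0 ^+ m.
Proof.
move=> m_le_B; rewrite /multinom_congr big_mkcond big_ffun_ordS.
under eq_bigr => x _ do rewrite (big_ffun_ord0 x) big_ord1 ffun_cons0 forall_ord0 andbT.
rewrite -big_mkcond (big_pred1 (Ordinal (m_le_B : m < B.+1)%N)) => [|x]; last first.
  by rewrite /= -val_eqE.
by rewrite /Pmult !big_ord1 ffun_cons0 divff ?mul1r // pnatr_eq0 -lt0n fact_gt0.
Qed.

Lemma prob_tail (R : realType) k (alpha : 'I_k.+2 -> R) :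
  (forall j, 0 < alpha j) -> \sum_j alpha j = 1 ->
  [/\ 0 < alpha ord0 < 1, forall j, 0 < alpha (lift ord0 j) / (1 - alpha ord0) &
      \sum_j alpha (lift ord0 j) / (1 - alpha ord0) = 1].
Proof.
move=> alpha_gt0; rewrite big_ord_recl => sum1.
have tail_gt0 : 0 < \sum_(j < k.+1) alpha (lift ord0 j).
  by rewrite big_ord_recl ltr_wpDr ?sumr_ge0 // => j _; rewrite ltW.
have q_eq : 1 - alpha ord0 = \sum_(j < k.+1) alpha (lift ord0 j).
  by rewrite -sum1 addrAC subrr add0r.
split.
- by rewrite alpha_gt0 -subr_gt0 q_eq.
- by move=> j; rewrite q_eq divr_gt0.
- by rewrite -mulr_suml q_eq divff ?gt_eqF.
Qed.

Lemma multinom_congr_mass (R : realType) k (alpha : 'I_k.+1 -> R) B m h : (m <= B)%N ->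
  (forall j, 0 < alpha j) -> \sum_j alpha j = 1 -> multinom_congr B m alpha 1 h = 1.
Proof.
elim: k alpha B m h => [|k IH] alpha B m h m_le_B alpha_gt0 sum1.
  by rewrite multinom_congr1 //; move: sum1; rewrite big_ord1 => ->; rewrite expr1n.
have [/andP[p_gt0 p_lt1] tail_gt0 tail_sum1] := prob_tail alpha_gt0 sum1.
rewrite multinom_congr_recl ?lt_eqF // -[RHS](binom_sum1 (alpha ord0) m).
apply: eq_bigr => x _; rewrite eqz_mod1 mul1r IH ?mulr1 //.
by rewrite (leq_trans (leq_subr _ _) m_le_B).
Qed.

Lemma multinom_congr_bound (R : realType) k (alpha : 'I_k.+1 -> R) :
  (forall j, 0 < alpha j) -> \sum_j alpha j = 1 ->
  exists2 C : R, 0 <= C & forall B m d h, (m <= B)%N -> (0 < d)%N ->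
    `|multinom_congr B m alpha d h - 1 / d%:R ^+ k| <= C / Num.sqrt m.+1%:R.
Proof.
elim: k alpha => [|k IH] alpha alpha_gt0 sum1.
  exists 0 => // B m d h m_le_B d_gt0; rewrite multinom_congr1 //.
  by move: sum1; rewrite big_ord1 => ->; rewrite expr1n expr0 divr1 subrr normr0 mul0r.
have [p01 tail_gt0 tail_sum1] := prob_tail alpha_gt0 sum1.
have /andP[p_gt0 p_lt1] := p01.
have [C' C'_ge0 tail_bound] := IH _ tail_gt0 tail_sum1.
have q_gt0 : 0 < 1 - alpha ord0 by rewrite subr_gt0.
exists (C' / (1 - alpha ord0) + 1 / (alpha ord0 * (1 - alpha ord0))).
  by rewrite addr_ge0 ?divr_ge0 ?mulr_ge0 ?(ltW p_gt0) ?(ltW q_gt0).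
move=> B m d h m_le_B d_gt0.
have d_gt0R : 0 < d%:R :> R by rewrite ltr0n.
rewrite multinom_congr_recl ?lt_eqF //.
under eq_bigr => x _ do rewrite eqz_mod_nat //.
have -> : 1 / d%:R ^+ k.+1 = (1 / d%:R ^+ k) / d%:R :> R.
  by rewrite exprS invfM !mul1r mulrC.
apply: (binom_congr_mixture p01 (G := fun x => multinom_congr B (m - x) _ d _)) => //.
- exact: absz_modz_lt.
- by rewrite divr_ge0 ?exprn_ge0 ?ler0n //= ler_pdivrMr ?exprn_gt0 // mul1r exprn_ege1 ?ler1n.
- move=> x x_le_m; apply: tail_bound => //.
  exact: leq_trans (leq_subr x m) m_le_B.
Qed.

Definition multinom_rows_congr (R : realType) (q k B : nat) (i : 'I_q -> nat)
    (alpha : 'I_q -> 'I_k -> R) (d : nat) (g : 'I_k.-1 -> int) : R :=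
  \sum_(s : {ffun 'I_q -> {ffun 'I_k -> 'I_B.+1}} |
          [forall t, (\sum_(j < k) (s t j : nat))%N == i t] &&
          [forall a : 'I_k.-1,
             ((\sum_(t < q) (s t (widen_ord (leq_pred k) a) : nat))%:Z == g a %[mod d%:Z])%Z])
    \prod_(t < q) Pmult (i t) (fun j => (s t j : nat)) (alpha t).

Lemma multinom_rows_congr_mod1 (R : realType) q k B i (alpha : 'I_q -> 'I_k -> R) g :
  multinom_rows_congr B i alpha 1 g =
  \sum_(s : {ffun 'I_q -> {ffun 'I_k -> 'I_B.+1}} |
          [forall t, (\sum_(j < k) (s t j : nat))%N == i t])
    \prod_(t < q) Pmult (i t) (fun j => (s t j : nat)) (alpha t).
Proof.
apply: eq_bigl => s; apply/andP/idP => [[] // | sum_s]; split => //.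
by apply/forallP => a; apply: eqz_mod1.
Qed.

Lemma eqz_mod_add_sub (x y z d : int) : (x + y == z %[mod d])%Z = (y == z - x %[mod d])%Z.
Proof. by rewrite -{1}(subrK x z) (addrC x) eqz_modDr. Qed.

Lemma multinom_rows_congr_split (R : realType) q k B i (alpha : 'I_q.+1 -> 'I_k -> R) d g :
  multinom_rows_congr B i alpha d g =
  \sum_(x : {ffun 'I_k -> 'I_B.+1}) \sum_(s : {ffun 'I_q -> {ffun 'I_k -> 'I_B.+1}})
    (if [&& (\sum_(j < k) (x j : nat))%N == i ord0,
            [forall t, (\sum_(j < k) (s t j : nat))%N == i (lift ord0 t)] &
            [forall a : 'I_k.-1, ((x (widen_ord (leq_pred k) a) : nat)%:Z +
                (\sum_(t < q) (s t (widen_ord (leq_pred k) a) : nat))%:Z == g a %[mod d%:Z])%Z]]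
     then Pmult (i ord0) (fun j => (x j : nat)) (alpha ord0) *
          \prod_(t < q) Pmult (i (lift ord0 t)) (fun j => (s t j : nat)) (alpha (lift ord0 t))
     else 0).
Proof.
rewrite /multinom_rows_congr big_mkcond big_ffun_ordS; apply: eq_bigr => x _.
apply: eq_bigr => s _; rewrite forall_ordS ffun_cons0 -andbA.
under [in LHS]eq_forallb => t do rewrite ffun_consS.
have sum_cons a : (\sum_(t < q.+1) ffun_cons x s t a = x a + \sum_(t < q) s t a)%N.
  by rewrite big_ord_recl ffun_cons0; congr (_ + _)%N; apply: eq_bigr => t _; rewrite ffun_consS.
under [X in _ && (_ && X)]eq_forallb => a do rewrite sum_cons PoszD.
case: ifP => // _.
by rewrite big_ord_recl ffun_cons0; congr (_ * _); apply: eq_bigr => t _; rewrite ffun_consS.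
Qed.

Lemma multinom_rows_congr_first (R : realType) q k B i (alpha : 'I_q.+1 -> 'I_k -> R) d g :
  multinom_rows_congr B i alpha d g =
  \sum_(x : {ffun 'I_k -> 'I_B.+1} | (\sum_(j < k) (x j : nat))%N == i ord0)
     Pmult (i ord0) (fun j => (x j : nat)) (alpha ord0) *
     multinom_rows_congr B (fun t => i (lift ord0 t)) (fun t => alpha (lift ord0 t)) d
       (fun a => g a - (x (widen_ord (leq_pred k) a) : nat)%:Z).
Proof.
rewrite multinom_rows_congr_split [RHS]big_mkcond; apply: eq_bigr => x _.
case: ifP => sum_x /=; last by apply: big1.
rewrite /multinom_rows_congr mulr_sumr [RHS]big_mkcond; apply: eq_bigr => s _.
under [X in _ && X]eq_forallb => a do rewrite eqz_mod_add_sub.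
by case: ifP; rewrite ?mulr0.
Qed.

Lemma multinom_rows_congr_rest (R : realType) q k B i (alpha : 'I_q.+1 -> 'I_k -> R) d g :
  multinom_rows_congr B i alpha d g =
  \sum_(s : {ffun 'I_q -> {ffun 'I_k -> 'I_B.+1}} |
          [forall t, (\sum_(j < k) (s t j : nat))%N == i (lift ord0 t)])
   (\prod_(t < q) Pmult (i (lift ord0 t)) (fun j => (s t j : nat)) (alpha (lift ord0 t))) *
   multinom_congr B (i ord0) (alpha ord0) d
     (fun a => g a - (\sum_(t < q) (s t (widen_ord (leq_pred k) a) : nat))%:Z).
Proof.
rewrite multinom_rows_congr_split exchange_big [RHS]big_mkcond; apply: eq_bigr => s _.
case: ifP => sum_s /=; last by apply: big1 => x _; rewrite andbF.
rewrite /multinom_congr mulr_sumr [RHS]big_mkcond; apply: eq_bigr => x _.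
under [X in _ && X]eq_forallb => a do rewrite addrC eqz_mod_add_sub.
by case: ifP => _; rewrite ?mulr0 // mulrC.
Qed.

Lemma norm_mixture_le (R : numDomainType) (I : finType) (P : pred I) (w v : I -> R) (c e : R) :
  (forall x, P x -> 0 <= w x) -> \sum_(x | P x) w x = 1 ->
  (forall x, P x -> `|v x - c| <= e) -> `|\sum_(x | P x) w x * v x - c| <= e.
Proof.
move=> w_ge0 w_sum1 v_close.
have <- : \sum_(x | P x) w x * (v x - c) = \sum_(x | P x) w x * v x - c.
  under eq_bigr do rewrite mulrBr.
  by rewrite sumrB -mulr_suml w_sum1 mul1r.
apply: le_trans (ler_norm_sum _ _ _) _.
apply: le_trans (_ : _ <= \sum_(x | P x) w x * e) _; last by rewrite -mulr_suml w_sum1 mul1r.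
apply: ler_sum => x Px; rewrite normrM ger0_norm ?w_ge0 //.
by rewrite ler_wpM2l ?w_ge0 ?v_close.
Qed.

Section Rows.
Variables (R : realType) (k B : nat).

Lemma multinom_rows_congr_mass q (i : 'I_q -> nat) (alpha : 'I_q -> 'I_k -> R) g :
  (forall t, (i t <= B)%N) ->
  (forall t m h, (m <= B)%N -> multinom_congr B m (alpha t) 1 h = 1) ->
  multinom_rows_congr B i alpha 1 g = 1.
Proof.
elim: q i alpha g => [|q IH] i alpha g i_le_B row_mass.
  rewrite multinom_rows_congr_mod1 (big_pred1 [ffun=> [ffun=> ord0]]) ?big_ord0 // => s.
  by rewrite forall_ord0; symmetry; apply/eqP/ffunP => -[].
have rest_mass g' :
    multinom_rows_congr B (fun t => i (lift ord0 t)) (fun t => alpha (lift ord0 t)) 1 g' = 1.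
  by apply: IH => [t | t m h]; [apply: i_le_B | apply: row_mass].
rewrite multinom_rows_congr_first; under eq_bigr do rewrite rest_mass mulr1.
by rewrite -(multinom_congr_mod1 _ _ _ (fun=> 0)) row_mass ?i_le_B.
Qed.

(* Condition on every row but [t0]: the constraint then bears on row [t0] alone. *)
Lemma multinom_rows_congr_bound d (C : R) q (i : 'I_q -> nat) (alpha : 'I_q -> 'I_k -> R) g
    (t0 : 'I_q) :
  (forall t, (i t <= B)%N) -> (forall t j, 0 <= alpha t j) ->
  (forall t m h, (m <= B)%N -> multinom_congr B m (alpha t) 1 h = 1) ->
  (forall t m h, (m <= B)%N ->
     `|multinom_congr B m (alpha t) d h - 1 / d%:R ^+ k.-1| <= C / Num.sqrt m.+1%:R) ->
  `|multinom_rows_congr B i alpha d g - 1 / d%:R ^+ k.-1| <= C / Num.sqrt (i t0).+1%:R.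
Proof.
elim: q i alpha g t0 => [|q IH] i alpha g t0 i_le_B alpha_ge0 row_mass row_bound.
  by case: t0.
case: (unliftP ord0 t0) => [t'|] ->.
- rewrite multinom_rows_congr_first; apply: norm_mixture_le => [x _||x _].
  + exact: Pmult_ge0.
  + by rewrite -(row_mass ord0 (i ord0) (fun=> 0)) ?multinom_congr_mod1 ?i_le_B.
  + by apply: IH => *; rewrite ?i_le_B ?alpha_ge0 ?row_mass ?row_bound.
- rewrite multinom_rows_congr_rest; apply: norm_mixture_le => [s _||s _].
  + by apply: prodr_ge0 => t _; apply: Pmult_ge0.
  + rewrite -(multinom_rows_congr_mod1 B _ _ (fun=> 0)).
    by apply: multinom_rows_congr_mass => [t | t m h]; [apply: i_le_B | apply: row_mass].
  + exact: row_bound.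
Qed.

End Rows.

Lemma exists_large_part q (i : 'I_q -> nat) (t0 : 'I_q) :
  exists t, (\sum_(t < q) i t <= q * i t)%N.
Proof.
have [t _ t_max] := @arg_maxnP _ t0 xpredT i isT.
exists t; have -> : (q * i t = \sum_(t' < q) i t)%N by rewrite sum_nat_const card_ord.
by apply: leq_sum => t' _; apply: t_max.
Qed.

Lemma ln_nat_ge1 (R : realType) (n : nat) : (4 <= n)%N -> 1 <= ln (n%:R : R).
Proof.
move=> n_ge4; have two_pos : (2 : R) \is Num.pos by rewrite posrE.
have ln2_ge : 1 / 2 <= ln (2 : R).
  have := @le_ln1Dx R (- (1 / 2)) ltac:(lra).
  have -> : 1 + - (1 / 2) = (2 : R)^-1 by field.
  by rewrite lnV //; lra.
have ln4 : ln (4 : R) = ln 2 + ln 2 by rewrite -lnM //; congr ln; field.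
apply: le_trans (_ : ln (4 : R) <= _); first lra.
rewrite ler_ln ?posrE ?ltr0n ?ler_nat //.
exact: leq_trans n_ge4.
Qed.

Lemma ler_div_sqrt_ln (R : realType) (C : R) (q n a : nat) :
  0 <= C -> (4 <= n)%N -> (n <= q * a)%N ->
  C / Num.sqrt a%:R <= C * Num.sqrt q%:R * ln n%:R / Num.sqrt n%:R.
Proof.
move=> C_ge0 n_ge4 n_le_qa.
have a_gt0 : (0 < a)%N.
  by case: a n_le_qa => //; rewrite muln0 leqn0 => /eqP n0; rewrite n0 in n_ge4.
have sa_gt0 : 0 < Num.sqrt a%:R :> R by rewrite sqrtr_gt0 ltr0n.
have sn_gt0 : 0 < Num.sqrt n%:R :> R by rewrite sqrtr_gt0 ltr0n (leq_trans _ n_ge4).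
have inv_sqrt_a_le : 1 / Num.sqrt a%:R <= Num.sqrt q%:R / Num.sqrt n%:R :> R.
  rewrite ler_pdivrMr // mulrAC ler_pdivlMr // mul1r -sqrtrM ?ler0n // ler_sqrt ?ler0n //.
  by rewrite -natrM ler_nat.
have ln_ge : Num.sqrt q%:R / Num.sqrt n%:R <= Num.sqrt q%:R * ln n%:R / Num.sqrt n%:R :> R.
  by rewrite ler_wpM2r ?invr_ge0 ?sqrtr_ge0 // ler_peMr ?sqrtr_ge0 ?ln_nat_ge1.
have := ler_wpM2l C_ge0 (le_trans inv_sqrt_a_le ln_ge).
by rewrite mul1r !mulrA.
Qed.

Theorem lemma2p4 (R : realType) (q k : nat) (alpha : 'I_q -> 'I_k -> R) :
  (1 <= q)%N -> (2 <= k)%N ->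
  (forall t j, 0 < alpha t j < 1) ->
  (forall t, \sum_(j < k) alpha t j = 1) ->
  exists (C : R) (N : nat),
    forall (n d : nat) (g : 'I_k.-1 -> int) (i : 'I_q -> nat),
      (N <= n)%N -> (1 <= d)%N ->
      (forall t, i t <= n)%N ->
      (\sum_(t < q) i t)%N = n ->
      `| \sum_(s : {ffun 'I_q -> {ffun 'I_k -> 'I_n.+1}} |
              [forall t, (\sum_(j < k) (s t j : nat))%N == i t] &&
              [forall a : 'I_k.-1,
                 ((\sum_(t < q) (s t (widen_ord (leq_pred k) a) : nat))%:Z
                    == g a %[mod (d%:Z)])%Z])
            \prod_(t < q) Pmult (i t) (fun j => (s t j : nat)) (alpha t)
         - 1 / (d%:R) ^+ k.-1 |
      <= C * ln (n%:R) / Num.sqrt (n%:R).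
Proof.
move=> q_gt0; case: k alpha => // k alpha _ alpha01 alpha_sum1.
have alpha_gt0 t j : 0 < alpha t j by case/andP: (alpha01 t j).
have [Cf Cf_ge0 Cf_bound] :=
  fin_all_exists2 (fun t => multinom_congr_bound (alpha_gt0 t) (alpha_sum1 t)).
set C := \sum_t Cf t.
have C_ge0 : 0 <= C by rewrite sumr_ge0.
have Cf_le_C t : Cf t <= C by rewrite /C (bigD1 t) //= lerDl sumr_ge0.
exists (C * Num.sqrt q%:R), 4%N => n d g i n_ge4 d_gt0 i_le_n sum_i.
have [t0 n_le] := exists_large_part i (Ordinal q_gt0).
apply: le_trans (multinom_rows_congr_bound (C := C) g t0 i_le_n _ _ _) _.
- by move=> t j; rewrite ltW.
- by move=> t m h m_le_n; rewrite multinom_congr_mass.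
- move=> t m h m_le_n; apply: le_trans (Cf_bound t n m d h m_le_n d_gt0) _.
  by rewrite ler_wpM2r ?invr_ge0 ?sqrtr_ge0.
by apply: ler_div_sqrt_ln => //; rewrite -sum_i (leq_trans n_le) ?leq_mul2l ?leqnSn ?orbT.
Qed.
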